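(* Let $T$ be a simple tree of maximum degree $\Delta$, let $k\ge\Delta$, and let $f$ be a covering projection from a graph $G$ to $T^{(k)}$. If $G$ contains a cycle of length 4 as a subgraph, then for at least one of the two pairs of opposite edges of this 4-cycle, both edges of the pair are mapped by $f$ onto semi-edges.
   Context: A graph is a triple $(V,\Lambda,\iota)$ where $V$ is a set of vertices, $\Lambda=E\cup L\cup S$ is a set of links partitioned into edges, loops and semi-edges, and $\iota$ assigns to each edge a 2-element subset of $V$ and to each loop or semi-edge a single vertex. A covering projection from $G$ to $H$ is a map $f:V_G\cup\Lambda_G\to V_H\cup\Lambda_H$ sending vertices to vertices and links to links such that: for every edge $e$ of $H$ with end-vertices $u,v$, $f^{-1}(e)$ is a perfect matching between $f^{-1}(u)$ and $f^{-1}(v)$; for every loop $l$ of $H$ at $u$, $f^{-1}(l)$ is a disjoint union of cycles spanning $f^{-1}(u)$; for every semi-edge $s$ of $H$ at $u$, $f^{-1}(s)$ is a disjoint union of edges and semi-edges spanning $f^{-1}(u)$. For a simple tree $T$ of maximum degree $\Delta$ and $k\ge\Delta$, $T^{(k)}$ denotes the $k$-regular graph obtained from $T$ by attaching $k-\deg_T(u)$ semi-edges to each vertex $u$. *)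

From mathcomp Require Import all_boot.
Set Implicit Arguments. Unset Strict Implicit. Unset Printing Implicit Defensive.

Inductive lkind := Edge | Loop | Semi.

Definition is_edge k := if k is Edge then true else false.
Definition is_loop k := if k is Loop then true else false.
Definition is_semi k := if k is Semi then true else false.

(** A (finite) graph (V, Lambda, iota): [gkind] gives the partition of the
    links into edges / loops / semi-edges, [gends] is iota. *)
Record graph := Graph {
  gV : finType;
  gL : finType;
  gkind : gL -> lkind;
  gends : gL -> {set gV} }.

Definition graph_wf (G : graph) : Prop :=
  forall l : gL G, #|gends l| = (if is_edge (gkind l) then 2 else 1).

Definition sdeg (G : graph) (S : pred (gL G)) (a : gV G) : nat :=
  #|[set x | S x & (a \in gends x) && ~~ is_loop (gkind x)]|
  + 2 * #|[set x | S x & (a \in gends x) && is_loop (gkind x)]|.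

Definition covering (G H : graph) (fV : gV G -> gV H) (fL : gL G -> gL H)
  : Prop :=
  forall l : gL H,
  match gkind l with
  | Edge =>
      (* f^{-1}(l) is a perfect matching between f^{-1}(u) and f^{-1}(v) *)
      (forall x, fL x = l -> gkind x = Edge /\ fV @: gends x = gends l) /\
      (forall a, fV a \in gends l ->
         #|[set x | (fL x == l) && (a \in gends x)]| = 1)
  | Loop =>
      (* f^{-1}(l) is a disjoint union of cycles spanning f^{-1}(u):
         a 2-regular spanning subgraph of edges/loops on f^{-1}(u) *)
      (forall x, fL x = l -> gkind x <> Semi /\ fV @: gends x = gends l) /\
      (forall a, fV a \in gends l -> sdeg (fun x => fL x == l) a = 2)
  | Semi =>
      (* f^{-1}(l) is a disjoint union of edges and semi-edges spanning
         f^{-1}(u) *)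
      (forall x, fL x = l -> gkind x <> Loop /\ fV @: gends x = gends l) /\
      (forall a, fV a \in gends l ->
         #|[set x | (fL x == l) && (a \in gends x)]| = 1)
  end.

Definition simple_tree (V : finType) (adj : rel V) : Prop :=
  [/\ symmetric adj, irreflexive adj, #|V| > 0,
      (forall x y, connect adj x y) &
      (forall p : seq V, 3 <= size p -> ~ ucycle adj p)].

Definition tdeg (V : finType) (adj : rel V) (v : V) : nat :=
  #|[set w | adj v w]|.

Definition max_deg (V : finType) (adj : rel V) : nat :=
  \max_(v : V) tdeg adj v.

(** The graph T^(k): the edges of T plus k - deg(v) semi-edges at each v. *)
Definition tree_edges (V : finType) (adj : rel V) :=
  {e : {set V} | [exists x, exists y, adj x y && (e == [set x; y])]}.

Definition tree_semis (V : finType) (adj : rel V) (k : nat) :=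
  {p : V * 'I_k | (p.2 : nat) < k - tdeg adj p.1}.

Definition Tk (V : finType) (adj : rel V) (k : nat) : graph :=
  @Graph V (tree_edges adj + tree_semis adj k)%type
    (fun l => match l with inl _ => Edge | inr _ => Semi end)
    (fun l => match l with inl e => val e | inr p => [set (val p).1] end).

Definition C4_in (G : graph) (v0 v1 v2 v3 : gV G) (e0 e1 e2 e3 : gL G)
  : Prop :=
  [/\ uniq [:: v0; v1; v2; v3],
      gkind e0 = Edge /\ gends e0 = [set v0; v1],
      gkind e1 = Edge /\ gends e1 = [set v1; v2],
      gkind e2 = Edge /\ gends e2 = [set v2; v3] &
      gkind e3 = Edge /\ gends e3 = [set v3; v0]].

From mathcomp Require Import all_boot.

(* Each edge of the 4-cycle is mapped either to a semi-edge, which identifies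
   the images of its ends, or to an edge of T.  A covering is injective on the
   non-loop links at a vertex, so two consecutive cycle edges mapped to edges
   of T are mapped to distinct edges: the image of the cycle is a closed lazy
   walk of length 4 in T that never backtracks at a vertex of the cycle.
   Deleting its stays leaves a square, a triangle, an immediate backtrack or a
   loop -- all impossible in a simple tree -- unless the stays sit at two
   opposite positions. *)

Set Implicit Arguments.
Unset Strict Implicit.
Unset Printing Implicit Defensive.

Lemma is_semiP (k : lkind) : reflect (k = Semi) (is_semi k).
Proof. by case: k; constructor. Qed.

Lemma set2_rel (T : finType) (r : rel T) (a b x y : T) :
  symmetric r -> r x y -> [set a; b] = [set x; y] -> r a b.
Proof.
move=> r_sym rxy eq_ab_xy.
have y_ab : y \in [set a; b] by rewrite eq_ab_xy set22.
have x_ab : x \in [set a; b] by rewrite eq_ab_xy set21.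
have a_xy : a \in [set x; y] by rewrite -eq_ab_xy set21.
have b_xy : b \in [set x; y] by rewrite -eq_ab_xy set22.
move: a_xy b_xy => /set2P[] eq_a /set2P[] eq_b; subst a b => //.
- by move: y_ab rxy; rewrite setUid inE => /eqP ->.
- by rewrite r_sym.
- by move: x_ab rxy; rewrite setUid inE => /eqP ->.
Qed.

Lemma set2_link_neq (G : graph) (x y : gL G) (a b c : gV G) :
  gends x = [set a; b] -> gends y = [set b; c] -> a != b -> a != c -> x != y.
Proof.
move=> ends_x ends_y neq_ab neq_ac; apply/eqP => eq_xy.
have : a \in gends y by rewrite -eq_xy ends_x set21.
by rewrite ends_y !inE (negbTE neq_ab) (negbTE neq_ac).
Qed.

Section Covering.
Variables (G H : graph) (fV : gV G -> gV H) (fL : gL G -> gL H).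
Hypothesis f_cov : covering fV fL.

Lemma covering_ends x : fV @: gends x = gends (fL x).
Proof.
by move: (f_cov (fL x)); case: (gkind (fL x)) => -[/(_ x erefl) []].
Qed.

Lemma covering_link_inj x y a :
  ~~ is_loop (gkind (fL x)) -> a \in gends x -> a \in gends y ->
  fL x = fL y -> x = y.
Proof.
move=> nloop_x ax ay eq_xy.
have a_fib : fV a \in gends (fL x) by rewrite -covering_ends imset_f.
suff : #|[set z | (fL z == fL x) && (a \in gends z)]| <= 1.
  by move/card_le1_eqP; apply; rewrite inE ?eq_xy eqxx ?ax ?ay.
move: (f_cov (fL x)) nloop_x.
by case: (gkind (fL x)) => //= -[_ /(_ a a_fib) ->].
Qed.

End Covering.

Section SimpleTree.
Variables (V : finType) (adj : rel V).
Hypothesis adj_tree : simple_tree adj.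

Lemma tree_adj_neq a b : adj a b -> a != b.
Proof.
case: adj_tree => _ adj_irr _ _ _ ab; apply/eqP => eq_ab.
by rewrite eq_ab adj_irr in ab.
Qed.

Lemma tree_no_triangle a b c : adj a b -> adj b c -> adj c a -> False.
Proof.
move=> ab bc ca; case: adj_tree => _ _ _ _ /(_ [:: a; b; c] isT); apply.
have := tree_adj_neq ca; rewrite eq_sym => neq_ac.
by rewrite /ucycle /= ab bc ca /= !inE negb_or neq_ac !tree_adj_neq.
Qed.

Lemma tree_no_square a b c d :
  adj a b -> adj b c -> adj c d -> adj d a -> a != c -> b != d -> False.
Proof.
move=> ab bc cd da neq_ac neq_bd.
case: adj_tree => _ _ _ _ /(_ [:: a; b; c; d] isT); apply.
have := tree_adj_neq da; rewrite eq_sym => neq_ad.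
rewrite /ucycle /= ab bc cd da /= !inE !negb_or neq_ac neq_bd neq_ad.
by rewrite !tree_adj_neq.
Qed.

Definition lazy_step (stay : bool) (a b : V) :=
  if stay then a == b else adj a b.

Lemma tree_closed_lazy_walk4 (w0 w1 w2 w3 : V) (s0 s1 s2 s3 : bool) :
  lazy_step s0 w0 w1 -> lazy_step s1 w1 w2 ->
  lazy_step s2 w2 w3 -> lazy_step s3 w3 w0 ->
  (~~ s0 -> ~~ s1 -> w0 != w2) -> (~~ s1 -> ~~ s2 -> w1 != w3) ->
  (~~ s2 -> ~~ s3 -> w2 != w0) -> (~~ s3 -> ~~ s0 -> w3 != w1) ->
  (s0 && s2) || (s1 && s3).
Proof.
rewrite /lazy_step => + + + + + + + +.
case: s0 s1 s2 s3 => [] [] [] [] //= h0 h1 h2 h3 nb0 nb1 nb2 nb3;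
  repeat match goal with e : is_true (_ == _) |- _ =>
    move/eqP: e => e; subst end.
all: first
  [ match goal with nb : _ -> _ -> is_true (?w != ?w) |- _ =>
      move: (nb isT isT); rewrite eqxx; done end
  | match goal with ww : is_true (adj ?w ?w) |- _ =>
      move/tree_adj_neq: ww; rewrite eqxx; done end
  | match goal with
      ab : is_true (adj ?a ?b), bc : is_true (adj ?b ?c),
      ca : is_true (adj ?c ?a) |- _ => case: (tree_no_triangle ab bc ca) end
  | case: (tree_no_square h0 h1 h2 h3 (nb0 isT isT) (nb1 isT isT)) ].
Qed.

End SimpleTree.

Lemma Tk_edge_adj (V : finType) (adj : rel V) (e : tree_edges adj) a b :
  symmetric adj -> val e = [set a; b] -> adj a b.
Proof.
move=> adj_sym ends_e.
have /existsP[x /existsP[y /andP[adj_xy /eqP ends_xy]]] := valP e.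
exact: set2_rel adj_sym adj_xy (etrans (esym ends_e) ends_xy).
Qed.

Lemma Tk_ends_inj (V : finType) (adj : rel V) (k : nat) (l l' : gL (Tk adj k)) :
  ~~ is_semi (gkind l) -> ~~ is_semi (gkind l') -> gends l = gends l' -> l = l'.
Proof. by case: l l' => [e|//] [e'|//] _ _ /val_inj ->. Qed.

Section CoveringTk.
Variables (V : finType) (adj : rel V) (k : nat) (G : graph).
Variables (fV : gV G -> gV (Tk adj k)) (fL : gL G -> gL (Tk adj k)).
Hypothesis f_cov : covering fV fL.

Lemma covering_Tk_ends x a b :
  gends x = [set a; b] -> gends (fL x) = [set fV a; fV b].
Proof.
by move=> ends_x; rewrite -(covering_ends f_cov) ends_x imsetU1 imset_set1.
Qed.

Lemma covering_Tk_lazy_step x a b : symmetric adj ->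
  gends x = [set a; b] -> lazy_step adj (is_semi (gkind (fL x))) (fV a) (fV b).
Proof.
move=> adj_sym /covering_Tk_ends; rewrite /lazy_step.
case: (fL x) => [e|p] /= ends_fx; first exact: Tk_edge_adj adj_sym ends_fx.
have : fV a \in [set (val p).1] by rewrite ends_fx set21.
have : fV b \in [set (val p).1] by rewrite ends_fx set22.
by rewrite !inE => /eqP -> /eqP ->.
Qed.

Lemma covering_Tk_nonbacktracking x y a b c :
  gends x = [set a; b] -> gends y = [set b; c] -> x != y ->
  ~~ is_semi (gkind (fL x)) -> ~~ is_semi (gkind (fL y)) -> fV a != fV c.
Proof.
move=> ends_x ends_y neq_xy edge_x edge_y; apply: contra_neq neq_xy => eq_ac.
have b_x : b \in gends x by rewrite ends_x set22.
have b_y : b \in gends y by rewrite ends_y set21.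
apply: (covering_link_inj f_cov _ b_x b_y); first by case: (fL x).
apply: Tk_ends_inj => //.
by rewrite (covering_Tk_ends ends_x) (covering_Tk_ends ends_y) eq_ac setUC.
Qed.

End CoveringTk.

Theorem mainTheorem3 (V : finType) (adj : rel V) (k : nat)
  (G : graph) (fV : gV G -> gV (Tk adj k)) (fL : gL G -> gL (Tk adj k))
  (v0 v1 v2 v3 : gV G) (e0 e1 e2 e3 : gL G) :
  simple_tree adj -> max_deg adj <= k ->
  graph_wf G -> covering fV fL ->
  C4_in v0 v1 v2 v3 e0 e1 e2 e3 ->
  (gkind (fL e0) = Semi /\ gkind (fL e2) = Semi) \/
  (gkind (fL e1) = Semi /\ gkind (fL e3) = Semi).
Proof.
move=> T_tree _ _ f_cov [uniq_v [_ ends0] [_ ends1] [_ ends2] [_ ends3]].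
have adj_sym : symmetric adj by case: T_tree.
move: uniq_v; rewrite /= !inE !negb_or.
case/and4P=> /and3P[n01 n02 n03] /andP[n12 n13] n23 _.
have ne01 := set2_link_neq ends0 ends1 n01 n02.
have ne12 := set2_link_neq ends1 ends2 n12 n13.
have ne23 : e2 != e3 by apply: set2_link_neq ends2 ends3 n23 _; rewrite eq_sym.
have ne30 : e3 != e0 by apply: set2_link_neq ends3 ends0 _ _; rewrite eq_sym.
have step := covering_Tk_lazy_step f_cov adj_sym.
have nb := covering_Tk_nonbacktracking f_cov.
have := tree_closed_lazy_walk4 T_tree (step _ _ _ ends0) (step _ _ _ ends1)
  (step _ _ _ ends2) (step _ _ _ ends3) (nb _ _ _ _ _ ends0 ends1 ne01)
  (nb _ _ _ _ _ ends1 ends2 ne12) (nb _ _ _ _ _ ends2 ends3 ne23)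
  (nb _ _ _ _ _ ends3 ends0 ne30).
by case/orP=> /andP[/is_semiP semi_a /is_semiP semi_b]; [left | right].
Qed.
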